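(* Let $0<q<1$, let $n$ be a positive integer and let $s_1,\dots,s_n$ be real numbers with $s_j>1$ for all $j$. Then \[ \sum_{\sigma\in\mathfrak{S}_n} \zeta\big[s_{\sigma(1)},s_{\sigma(2)},\dots,s_{\sigma(n)}\big] = \sum_{\mathscr{P}} (-1)^{n-|\mathscr{P}|} \prod_{P\in\mathscr{P}} (|P|-1)! \sum_{\nu=0}^{|P|-1}\binom{|P|-1}{\nu}(1-q)^{\nu}\,\zeta\Big[\sum_{j\in P}s_j-\nu\Big], \] where $\mathfrak{S}_n$ is the symmetric group on $\{1,\dots,n\}$ and the sum on the right runs over all unordered set partitions $\mathscr{P}$ of $\{1,\dots,n\}$ (sets of pairwise disjoint non-empty subsets with union $\{1,\dots,n\}$), $|\mathscr{P}|$ being the number of blocks.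
   Context: Fix $0<q<1$. For real $x$, $[x]_q := (1-q^x)/(1-q)$. For an integer $m\ge1$ and real $s_1,\dots,s_m$ with $s_1>1$ and $s_j\ge1$ for $j\ge2$, the multiple $q$-zeta function is $\zeta[s_1,\dots,s_m] := \sum_{k_1>\cdots>k_m>0}\prod_{j=1}^m q^{(s_j-1)k_j}/[k_j]_q^{s_j}$ (sum over positive integers). *)

From HB Require Import structures.
From mathcomp Require Import all_boot all_order all_algebra all_fingroup.
From mathcomp Require Import all_classical all_reals all_analysis.
Set Implicit Arguments. Unset Strict Implicit. Unset Printing Implicit Defensive.
Import Order.TTheory GRing.Theory Num.Theory numFieldNormedType.Exports.
Local Open Scope ring_scope.

Section QZeta.
Variable R : realType.

Definition qint (q x : R) : R := (1 - q `^ x) / (1 - q).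

Definition qterm (q s : R) (k : nat) : R :=
  q `^ ((s - 1) * k%:R) / (qint q k%:R) `^ s.

(* truncated multiple sum over N > k_1 > ... > k_m > 0 *)
Fixpoint mqzeta_trunc (q : R) (l : seq R) (N : nat) : R :=
  match l with
  | [::] => 1
  | s :: l' => \sum_(1 <= k < N) qterm q s k * mqzeta_trunc q l' k
  end.

Definition mqzeta (q : R) (l : seq R) : R :=
  limn (fun N => mqzeta_trunc q l N).

End QZeta.

(* Truncate every series at N.  The truncated left side is a symmetrized
   nested sum; since the largest index N - 1 is either unused or taken by a
   single j, it satisfies I_{N+1}(A) = I_N(A) + \sum_(y in A) f_y(N) I_N(A - y).
   The truncated right side obeys the same recursion: split off the last term
   of every block's power sum and collect the blocks taking it into a
   partition Q of some S; the coefficient of \prod_(j in S) f_j(N) is then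
   \sum_Q (-1)^(|S|-|Q|) \prod_(B in Q) (|B|-1)!, which is 1 if |S| <= 1 and
   0 otherwise.  Within a block, the product of the summands of index k
   expands by the binomial theorem, because (1 - q) [k]_q = 1 - q^k.  All
   truncations increase to their limits, so the identity passes to the limit. *)

From HB Require Import structures.
From mathcomp Require Import all_boot all_order all_algebra all_fingroup.
From mathcomp Require Import ring zify.
Set Implicit Arguments. Unset Strict Implicit. Unset Printing Implicit Defensive.
Import Order.TTheory GRing.Theory Num.Theory.
Local Open Scope ring_scope.

Lemma setUD_subset (T : finType) (A B : {set T}) : B \subset A -> B :|: (A :\: B) = A.
Proof. by move=> /setIidPr BA; rewrite -{1}BA setID. Qed.

Section SetPartitions.
Variable T : finType.
Implicit Types (A S U : {set T}) (P Q : {set {set T}}).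

Lemma cover_setU P Q : cover (P :|: Q) = cover P :|: cover Q.
Proof. exact: bigcup_setU. Qed.

Lemma cover_subset P Q : Q \subset P -> cover Q \subset cover P.
Proof.
move=> /subsetP QP; apply/subsetP => x /bigcupP[B BQ xB].
by apply/bigcupP; exists B => //; apply: QP.
Qed.

Lemma cover_setD P Q :
  trivIset P -> Q \subset P -> cover (P :\: Q) = cover P :\: cover Q.
Proof.
move=> /trivIsetP tP /subsetP QP; apply/setP => x; rewrite inE.
apply/bigcupP/andP => [[B /setDP[BP BQ] xB]|[xQ /bigcupP[B BP xB]]].
  split; last by apply/bigcupP; exists B.
  apply/bigcupP => -[B' B'Q xB'].
  have := tP B B' BP (QP _ B'Q); case: eqP => [eBB'|_ /(_ isT)].
    by move: BQ; rewrite eBB' B'Q.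
  by move/disjointFr => /(_ x xB); rewrite xB'.
exists B => //; rewrite inE BP andbT.
by apply: contraNN xQ => BQ; apply/bigcupP; exists B.
Qed.

Lemma partition_subset P Q A :
  partition P A -> Q \subset P -> partition Q (cover Q) && (cover Q \subset A).
Proof.
move=> pP QP; rewrite /partition eqxx (trivIsetS QP (partition_trivIset pP)) /=.
rewrite -(cover_partition pP) cover_subset // andbT.
by apply: contraTN isT => /(subsetP QP); rewrite (partition0 pP).
Qed.

(* The partitions of [A] containing [Q] correspond to the partitions of
   [A :\: cover Q]. *)
Lemma partition_setU_subset A Q (P' : {set {set T}}) :
  partition Q (cover Q) -> cover Q \subset A ->
  [&& partition (Q :|: P') A, Q \subset Q :|: P' & (Q :|: P') :\: Q == P']
  = partition P' (A :\: cover Q).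
Proof.
move=> pQ QA; apply/idP/idP.
  move=> /and3P[pP QP /eqP <-].
  rewrite /partition cover_setD ?(partition_trivIset pP) //.
  rewrite (cover_partition pP) eqxx trivIsetD ?(partition_trivIset pP) //=.
  by rewrite inE negb_and (partition0 pP) orbT.
move=> pP'.
have dQP' : [disjoint cover Q & cover P'].
  by rewrite (cover_partition pP') -setI_eq0 setDE setICA setICr setI0.
have dP'Q : [disjoint P' & Q].
  rewrite -setI_eq0; apply/eqP/setP => B; rewrite !inE.
  apply/negP => /andP[BP' BQ]; have /set0Pn[x xB] := partition_neq0 pP' BP'.
  have xQ : x \in cover Q by apply/bigcupP; exists B.
  have xP' : x \in cover P' by apply/bigcupP; exists B.
  by rewrite (disjointFr dQP' xQ) in xP'.
rewrite subsetUl setDUl setDv set0U (setDidPl dP'Q) eqxx !andbT.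
rewrite /partition cover_setU (cover_partition pP') setUD_subset // eqxx /=.
rewrite trivIsetU ?(partition_trivIset pQ) ?(partition_trivIset pP') //=.
by rewrite inE (partition0 pQ) (partition0 pP').
Qed.

Lemma sum_partition_subpartition (R : nmodType) A
    (G : {set {set T}} -> {set {set T}} -> R) :
  \sum_(P : {set {set T}} | partition P A)
     \sum_(Q : {set {set T}} | Q \subset P) G Q (P :\: Q) =
  \sum_(S : {set T} | S \subset A) \sum_(Q : {set {set T}} | partition Q S)
     \sum_(P' : {set {set T}} | partition P' (A :\: S)) G Q P'.
Proof.
rewrite (exchange_big_dep xpredT) //= [RHS](exchange_big_dep xpredT) //=.
apply: eq_bigr => Q _.
have [/andP[pQ QA]|npQ] := boolP (partition Q (cover Q) && (cover Q \subset A)).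
  rewrite (big_pred1 (cover Q)) => [|S /=]; last first.
    by apply/andP/eqP => [[_ /cover_partition]|->].
  rewrite (reindex_onto (fun P' => Q :|: P') (fun P => P :\: Q)) /=.
    apply: eq_big => [P'|P' /andP[_ /eqP -> //]].
    by rewrite -andbA (partition_setU_subset _ pQ QA).
  by move=> P /andP[_ QP]; apply: setUD_subset.
rewrite big_pred0 => [|P]; last first.
  by apply/negP => /andP[pP QP]; move/negP: npQ; apply; exact: partition_subset pP QP.
rewrite big_pred0 // => S; apply/negP => /andP[SA pS]; move/negP: npQ; apply.
by rewrite (cover_partition pS) pS.
Qed.

Lemma eq_set1_pblock P A x Q :
  partition P A -> x \in A ->
  [&& Q \subset P, x \in cover Q & #|Q| == 1%N] = (Q == [set pblock P x]).
Proof.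
move=> pP xA; have tP := partition_trivIset pP.
have xP : x \in cover P by rewrite (cover_partition pP).
apply/idP/eqP => [/and3P[QP xQ /cards1P[B eQ]]|->].
  move: QP xQ; rewrite eQ sub1set cover1 => BP xB.
  by rewrite (def_pblock tP BP xB).
by rewrite sub1set pblock_mem // cover1 mem_pblock xP cards1.
Qed.

Lemma partition_set1 Q S x :
  [&& partition Q S, x \in cover Q & #|Q| == 1%N] = (x \in S) && (Q == [set S]).
Proof.
apply/idP/andP => [/and3P[pQ xQ /cards1P[B eQ]]|[xS /eqP->]].
  move: pQ xQ; rewrite eQ => pB; rewrite -(cover_partition pB) cover1 => ->.
  by rewrite eqxx.
rewrite /partition cover1 eqxx trivIset1 cards1 xS eqxx !andbT /= inE.
by apply/negP => /eqP S0; move: xS; rewrite -S0 inE.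
Qed.

Lemma sum_partition_pblock (R : nmodType) A x (F : {set {set T}} -> R) :
  x \in A ->
  \sum_(P : {set {set T}} | partition P A) F P =
  \sum_(U : {set T} | U \subset A :\ x)
     \sum_(P' : {set {set T}} | partition P' (A :\: (x |: U))) F ((x |: U) |: P').
Proof.
move=> xA; pose G Q P' := if (x \in cover Q) && (#|Q| == 1%N) then F (Q :|: P') else 0.
have lhsE : \sum_(P : {set {set T}} | partition P A) F P =
    \sum_(P : {set {set T}} | partition P A)
       \sum_(Q : {set {set T}} | Q \subset P) G Q (P :\: Q).
  apply: eq_bigr => P pP; rewrite -big_mkcondr /=.
  rewrite (big_pred1 [set pblock P x]) => [|Q]; last by rewrite /= (eq_set1_pblock _ pP xA).
  by rewrite setUD_subset // sub1set pblock_mem // (cover_partition pP).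
have inner S :
    \sum_(Q : {set {set T}} | partition Q S)
       \sum_(P' : {set {set T}} | partition P' (A :\: S)) G Q P' =
    if x \in S then \sum_(P' : {set {set T}} | partition P' (A :\: S)) F ([set S] :|: P')
    else 0.
  rewrite (eq_bigr (fun Q => if (x \in cover Q) && (#|Q| == 1%N) then
      \sum_(P' : {set {set T}} | partition P' (A :\: S)) F (Q :|: P') else 0)); last first.
    by move=> Q _; rewrite /G; case: ifP => // _; rewrite big1.
  rewrite -big_mkcondr /=; have [xS|xS] := boolP (x \in S).
    by rewrite (big_pred1 [set S]) // => Q; rewrite /= partition_set1 xS.
  by rewrite big_pred0 // => Q; rewrite /= partition_set1 (negbTE xS).
rewrite lhsE sum_partition_subpartition (eq_bigr _ (fun S _ => inner S)).
rewrite -big_mkcondr /= (reindex_onto (fun U => x |: U) (fun S => S :\ x)) /=; last first.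
  by move=> S /andP[_ xS]; rewrite setD1K.
apply: eq_bigl => U; rewrite subsetD1 setU11 andbT subUset sub1set xA /=.
have [xU|xU] /= := boolP (x \in U); last by rewrite setU1K ?eqxx ?andbT.
rewrite andbF; apply/negbTE/negP => /andP[_ /eqP xUx].
by move: xU; rewrite -xUx !inE eqxx.
Qed.

Lemma sum_subset_card (R : nmodType) (V : {set T}) (g : nat -> R) :
  \sum_(U : {set T} | U \subset V) g #|U| = \sum_(k < #|V|.+1) g k *+ 'C(#|V|, k).
Proof.
rewrite (partition_big (fun U : {set T} => inord #|U| : 'I_#|V|.+1) xpredT) //=.
apply: eq_bigr => k _.
have cardE U : U \subset V -> (inord #|U| == k :> 'I_#|V|.+1) = (#|U| == k).
  by move=> UV; rewrite -val_eqE /= inordK // ltnS subset_leq_card.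
rewrite (eq_bigr (fun _ => g k)) => [|U /andP[UV]]; last by rewrite cardE // => /eqP ->.
rewrite sumr_const -cards_draws; congr (_ *+ _); apply: eq_card => U.
by rewrite !inE unfold_in /=; case: (boolP (U \subset V)) => UV /=; rewrite ?cardE.
Qed.

Lemma partition_sign (R : pzRingType) P A : partition P A ->
  (-1) ^+ (#|A| - #|P|) = (-1) ^+ (#|A| + #|P|) :> R.
Proof.
move=> pP; have le_PA : (#|P| <= #|A|)%N.
  rewrite (card_partition pP) -sum1_card leq_sum // => B BP.
  by rewrite card_gt0 (partition_neq0 pP BP).
rewrite -[in RHS](subnK le_PA) -addnA addnn -mul2n exprD exprM.
by rewrite expr2 mulrNN mulr1 expr1n mulr1.
Qed.

Section PartitionSums.
Variable R : comPzRingType.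

Definition partition_weight (S : {set T}) : R :=
  \sum_(Q : {set {set T}} | partition Q S)
     (-1) ^+ (#|S| + #|Q|) * \prod_(B in Q) (#|B|.-1)`!%:R.

(* Sorting by the block [x |: U] containing a fixed [x \in S] gives the
   recursion w(S) = \sum_U (-1)^|U| |U|! w(S :\: (x |: U)). *)
Lemma partition_weightE S : partition_weight S = (#|S| <= 1)%N%:R.
Proof.
have [N leN] := ubnP #|S|; elim: N => // N IH in S leN *.
have [->|[x xS]] := set_0Vmem S.
  rewrite /partition_weight (big_pred1 set0) => [|Q]; last by rewrite partition_set0.
  by rewrite !cards0 big_set0 mulr1 expr0.
rewrite /partition_weight (sum_partition_pblock _ xS).
set m := #|S :\ x|; have cardS : #|S| = m.+1 by rewrite /m (cardsD1 x S) xS.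
have blockE (U : {set T}) : U \subset S :\ x ->
    \sum_(P' : {set {set T}} | partition P' (S :\: (x |: U)))
       (-1) ^+ (#|S| + #|(x |: U) |: P'|) * \prod_(B in (x |: U) |: P') (#|B|.-1)`!%:R
    = (-1) ^+ #|U| * #|U|`!%:R * ((m - #|U| <= 1)%N%:R : R).
  move=> US; have xU : x \notin U by apply/negP => /(subsetP US); rewrite !inE eqxx.
  have xUS : x |: U \subset S by rewrite subUset sub1set xS (subset_trans US) ?subD1set.
  have cardU : #|x |: U| = #|U|.+1 by rewrite cardsU1 xU.
  have cardSU : #|S :\: (x |: U)| = (m - #|U|)%N.
    by rewrite cardsD (setIidPr xUS) cardU cardS subSS.
  have ltSU : (#|S :\: (x |: U)| < N)%N by move: leN; rewrite cardSU cardS; lia.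
  rewrite -cardSU -(IH _ ltSU) /partition_weight big_distrr /=.
  apply: eq_bigr => P' pP'.
  have xUP' : x |: U \notin P'.
    apply: contraTN isT => xUP'.
    have : x \in cover P' by apply/bigcupP; exists (x |: U); rewrite ?setU11.
    by rewrite (cover_partition pP') !inE eqxx.
  rewrite cardsU1 xUP' big_setU1 //= cardU /=.
  have -> : (#|S| + (1 + #|P'|))%N = (#|U| + (#|S :\: (x |: U)| + #|P'|)).+2.
    by have := subset_leq_card US; rewrite cardSU cardS -/m; lia.
  by rewrite !exprS !mulN1r opprK exprD !mulrA; congr (_ * _); exact: mulrAC.
rewrite (eq_bigr _ blockE).
rewrite (sum_subset_card _ (fun k => (-1) ^+ k * k`!%:R * ((m - k <= 1)%N%:R) : R)).
rewrite cardS -/m; clear blockE cardS leN IH; clearbody m; case: m => [|m].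
  by rewrite big_ord_recr big_ord0 /= add0r binn expr0 mul1r mulr1.
rewrite !big_ord_recr /= big1 => [|k _]; last first.
  by rewrite (_ : (m.+1 - k <= 1)%N = false) ?mulr0 ?mul0rn //; case: k => k /=; lia.
rewrite binSn binn subnn subSnn factS natrM exprS /= -mulr_natr; ring.
Qed.

Lemma prod_addr_subsets P (a b : {set T} -> R) :
  \prod_(B in P) (a B + b B) =
  \sum_(Q : {set {set T}} | Q \subset P) \prod_(B in Q) a B * \prod_(B in P :\: Q) b B.
Proof.
rewrite big_mkcond /= (eq_bigr (fun B => (if B \in P then a B else 0) +
    (if B \in P then b B else 1))) => [|B _]; last by case: ifP; rewrite ?addr0 ?add0r.
rewrite bigA_distr [RHS]big_mkcond /=; apply: eq_bigr => Q _.
have [QP|/subsetPn[B BQ BP]] := boolP (Q \subset P); last first.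
  by rewrite (bigD1 B) //= BQ (negbTE BP) mul0r.
rewrite (bigID (mem Q)) /=; congr (_ * _).
  by apply: eq_bigr => B BQ; rewrite BQ (subsetP QP).
rewrite big_mkcond [RHS]big_mkcond; apply: eq_bigr => B _.
by rewrite !inE; case: (B \in Q); case: (B \in P).
Qed.

Lemma sum_subset_card_le1 A (h : {set T} -> R) :
  \sum_(S : {set T} | S \subset A) (#|S| <= 1)%N%:R * h S =
  h set0 + \sum_(y in A) h [set y].
Proof.
rewrite (eq_bigr (fun S => if (#|S| <= 1)%N then h S else 0)) => [|S _]; last first.
  by case: ifP; rewrite ?mul1r ?mul0r.
rewrite -big_mkcondr /= (bigD1 set0) ?sub0set ?cards0 //=; congr (_ + _).
rewrite -(big_imset h (h := set1) (A := A)) => [|y z _ _]; last exact: set1_inj.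
apply: eq_bigl => S; apply/idP/imsetP => [/andP[/andP[SA]]|[y yA ->]].
  rewrite leq_eqVlt ltnS leqn0 cards_eq0 => /orP[/cards1P[y Sy] _|->//].
  by exists y => //; rewrite -sub1set -Sy.
by rewrite sub1set yA cards1 /=; apply/negP => /eqP/setP/(_ y); rewrite !inE eqxx.
Qed.

Variable f : T -> nat -> R.

Definition power_trunc (B : {set T}) N : R := \sum_(k < N) \prod_(j in B) f j k.

Definition partition_trunc A N : R :=
  \sum_(P : {set {set T}} | partition P A)
    (-1) ^+ (#|A| + #|P|) * \prod_(B in P) ((#|B|.-1)`!%:R * power_trunc B N).

(* [sym_nest N A] is the sum of [\prod_(y in A) f y (k y)] over the injections
   [k : A -> 'I_N]: the largest index [N - 1] is either not used, or used by
   a single [y]. *)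
Fixpoint sym_nest N A : R :=
  match N with
  | 0 => (A == set0)%:R
  | N'.+1 => sym_nest N' A + \sum_(y in A) f y N' * sym_nest N' (A :\ y)
  end.

Lemma partition_trunc0 A : partition_trunc A 0 = (A == set0)%:R.
Proof.
rewrite /partition_trunc; have [->|A0] := eqVneq A set0.
  rewrite (big_pred1 set0) => [|P]; last by rewrite partition_set0.
  by rewrite !cards0 big_set0 mulr1 expr0.
rewrite big1 // => P pP; have /set0Pn[B BP] : P != set0.
  by apply: contra_neq A0 => P0; rewrite -(cover_partition pP) P0 /cover big_set0.
by rewrite (bigD1 B) //= /power_trunc big_ord0 mulr0 mul0r mulr0.
Qed.

Lemma partition_truncS A N :
  partition_trunc A N.+1 =
  partition_trunc A N + \sum_(y in A) f y N * partition_trunc (A :\ y) N.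
Proof.
pose G Q P' := (-1) ^+ (#|cover Q| + #|Q|) *
    \prod_(B in Q) ((#|B|.-1)`!%:R * \prod_(j in B) f j N) *
  ((-1) ^+ (#|A :\: cover Q| + #|P'|) *
    \prod_(B in P') ((#|B|.-1)`!%:R * power_trunc B N)).
transitivity (\sum_(P : {set {set T}} | partition P A)
   \sum_(Q : {set {set T}} | Q \subset P) G Q (P :\: Q)).
  apply: eq_bigr => P pP.
  under eq_bigr => B _ do rewrite /power_trunc big_ord_recr /= mulrDr addrC.
  rewrite prod_addr_subsets big_distrr /=; apply: eq_bigr => Q QP.
  rewrite /G mulrACA -exprD; congr (_ ^+ _ * _).
  have QA : cover Q \subset A by rewrite -(cover_partition pP) cover_subset.
  rewrite -(cardsID (cover Q) A) -(cardsID Q P) (setIidPr QA) (setIidPr QP); lia.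
rewrite sum_partition_subpartition.
rewrite (eq_bigr (fun S => (#|S| <= 1)%N%:R * (\prod_(j in S) f j N *
    partition_trunc (A :\: S) N))) => [|S SA]; last first.
  rewrite -partition_weightE /partition_weight !big_distrl /=.
  apply: eq_bigr => Q pQ; rewrite mulrA big_distrr /=; apply: eq_bigr => P' pP'.
  rewrite /G (cover_partition pQ) big_split /= -(set_partition_big _ pQ).
  by rewrite !mulrA.
rewrite sum_subset_card_le1 big_set0 mul1r setD0; congr (_ + _).
by apply: eq_bigr => y yA; rewrite big_set1.
Qed.

Lemma sym_nestE N A : sym_nest N A = partition_trunc A N.
Proof.
elim: N A => [|N IH] A /=; first by rewrite partition_trunc0.
by rewrite partition_truncS IH; congr (_ + _); apply: eq_bigr => y _; rewrite IH.
Qed.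

Fixpoint nest (l : seq T) N : R :=
  if l is x :: l' then \sum_(k < N) f x k * nest l' k else 1.

Lemma sum_permutations_cons (F : seq T -> R) (l : seq T) :
  uniq l -> (0 < size l)%N ->
  \sum_(p <- permutations l) F p =
  \sum_(x <- l) \sum_(t <- permutations (rem x l)) F (x :: t).
Proof.
move=> ul l0; rewrite (perm_big _ (permutationsE l0)) /= undup_id //.
by rewrite big_allpairs_dep.
Qed.

Lemma sum_permutations_nest N (l : seq T) :
  uniq l -> \sum_(p <- permutations l) nest p N = sym_nest N [set x in l].
Proof.
have set_nil : [set x in [::] : seq T] = set0 by apply/setP => y; rewrite !inE.
elim: N l => [|N IH] [|x0 l0] ul.
- by rewrite big_seq1 /= set_nil eqxx.
- rewrite sum_permutations_cons //= big1_seq => [|y _]; last first.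
    by rewrite big1 // => t _; rewrite big_ord0.
  by case: eqP => // /setP/(_ x0); rewrite !inE eqxx.
- by rewrite big_seq1 /= set_nil big_set0 addr0 -set_nil -(IH [::]) // big_seq1.
set l := x0 :: l0; rewrite sum_permutations_cons //.
under eq_bigr => x _ do under eq_bigr => t _ do rewrite /= big_ord_recr.
under eq_bigr => x _ do rewrite big_split /= -big_distrr /=.
rewrite big_split /= -(sum_permutations_cons (nest^~ N)) // IH //; congr (_ + _).
rewrite big_uniq //; apply: eq_big => [y|y yl]; first by rewrite inE.
rewrite (IH (rem y l)) ?rem_uniq //; congr (_ * sym_nest _ _).
by apply/setP => z; rewrite !inE (mem_rem_uniq _ ul) inE andbC.
Qed.

End PartitionSums.

End SetPartitions.

Lemma sum_perm_enum (R : nmodType) n (G : seq 'I_n -> R) :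
  \sum_(sigma : 'S_n) G [seq sigma i | i <- enum 'I_n] =
  \sum_(p <- permutations (enum 'I_n)) G p.
Proof.
pose g (sigma : 'S_n) := [seq sigma i | i <- enum 'I_n].
rewrite -(big_map g xpredT G); apply: perm_big.
have g_inj : injective g.
  by move=> sigma tau /eq_in_map eq_st; apply/permP => i; exact: eq_st (mem_enum _ i).
have g_uniq : uniq (map g (index_enum 'S_n)) by rewrite map_inj_uniq ?index_enum_uniq.
apply: uniq_perm => //; first exact: permutations_uniq.
apply: (uniq_min_size g_uniq _ _).2.
  move=> p /mapP[sigma _ ->]; rewrite mem_permutations.
  apply: uniq_perm; first by rewrite map_inj_uniq ?enum_uniq //; exact: perm_inj.
    exact: enum_uniq.
  move=> i; rewrite mem_enum; apply/mapP; exists (sigma^-1 i)%g; rewrite ?mem_enum //.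
  by rewrite permKV.
have size_g : size (map g (index_enum 'S_n)) = n`!.
  by rewrite size_map [index_enum _]unlock -enumT -cardT card_Sn.
by rewrite size_permutations ?enum_uniq // size_g size_enum_ord.
Qed.

(* Imported only now: classical_sets' [partition] and [cover] would shadow
   those of finset. *)
From mathcomp Require Import all_classical all_reals all_analysis.
From mathcomp Require Import lra.
Import numFieldNormedType.Exports.
Local Open Scope classical_set_scope.
Local Open Scope ring_scope.

Section MultipleQZetaTruncation.
Variables (R : realType) (q : R).
Hypotheses (q_gt0 : 0 < q) (q_lt1 : q < 1).
Let q_ge0 : 0 <= q := ltW q_gt0.

Lemma qint_ge1 k : (0 < k)%N -> 1 <= qint q k%:R.
Proof.
case: k => // k _; rewrite /qint (powR_mulrn _ q_ge0) ler_pdivlMr ?subr_gt0 // mul1r.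
rewrite lerD2l lerN2 exprS ler_piMr //.
exact: exprn_ile1 q_ge0 (ltW q_lt1).
Qed.

Lemma qpowR_lt1 x : 0 < x -> q `^ x < 1.
Proof.
move=> x_gt0; apply: (@lt_le_trans _ _ (1 `^ x)); last by rewrite powR1.
by apply: gt0_ltr_powR; rewrite // nnegrE.
Qed.

Lemma qterm_ge0 x k : 0 <= qterm q x k.
Proof. by rewrite /qterm divr_ge0 ?powR_ge0. Qed.

Lemma qterm0 x : x != 0 -> qterm q x 0 = 0.
Proof. by move=> x0; rewrite /qterm /qint powRr0 subrr mul0r powR0 // invr0 mulr0. Qed.

Lemma qterm_le_expr x k : 1 < x -> qterm q x k <= (q `^ (x - 1)) ^+ k.
Proof.
move=> x_gt1; case: k => [|k]; first by rewrite qterm0 ?expr0 ?gt_eqF // (lt_trans ltr01).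
have K_ge1 := qint_ge1 (ltn0Sn k).
rewrite /qterm ler_pdivrMr ?powR_gt0 ?(lt_le_trans ltr01) //.
rewrite powRrM powR_mulrn ?powR_ge0 // ler_peMr ?exprn_ge0 ?powR_ge0 //.
have := ler_powR K_ge1 (_ : 0 <= x); rewrite powRr0; apply.
exact: ltW (lt_trans ltr01 x_gt1).
Qed.

Lemma qterm_powR x k : (0 < k)%N ->
  qterm q x k = (q ^+ k / qint q k%:R) `^ x / q ^+ k.
Proof.
move=> k_gt0; have Q_gt0 : 0 < q ^+ k by rewrite exprn_gt0.
have K_gt0 : 0 < qint q k%:R by apply: lt_le_trans (qint_ge1 k_gt0).
rewrite /qterm (mulrC (x - 1)) powRrM (powR_mulrn _ q_ge0).
rewrite powRB; last by rewrite (gt_eqF Q_gt0) implybT.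
rewrite (powRr1 (ltW Q_gt0)) powRM ?invr_ge0 ?(ltW Q_gt0) ?(ltW K_gt0) //.
by rewrite -(powR_inv1 (ltW K_gt0)) powRAC powR_inv1 ?powR_ge0 // mulrAC.
Qed.

Lemma mqzeta_trunc_cons x l N : x != 0 ->
  mqzeta_trunc q (x :: l) N = \sum_(k < N) qterm q x k * mqzeta_trunc q l k.
Proof.
move=> x0; rewrite /= -(big_mkord xpredT (fun k => qterm q x k * mqzeta_trunc q l k)).
case: N => [|N]; first by rewrite !big_geq.
by rewrite [in RHS]big_ltn // qterm0 // mul0r add0r.
Qed.

Lemma mqzeta_trunc_ge0 l N : 0 <= mqzeta_trunc q l N.
Proof.
elim: l N => [|x l IH] N /=; first exact: ler01.
by apply: sumr_ge0 => k _; rewrite mulr_ge0 ?qterm_ge0.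
Qed.

Definition mqzeta_bound (l : seq R) : R := \prod_(x <- l) (1 - q `^ (x - 1))^-1.

Lemma mqzeta_trunc_le_bound l N :
  all (fun x => 1 < x) l -> mqzeta_trunc q l N <= mqzeta_bound l.
Proof.
elim: l N => [|x l IH] N => [_|]; first by rewrite /mqzeta_bound big_nil.
rewrite [all _ _]/= => /andP[x_gt1 l_gt1].
have r_gt0 : 0 < q `^ (x - 1) by rewrite powR_gt0.
have r_lt1 : q `^ (x - 1) < 1 by rewrite qpowR_lt1 // subr_gt0.
have bound_ge0 : 0 <= mqzeta_bound l.
  by apply: (le_trans (mqzeta_trunc_ge0 l 0)); exact: IH.
rewrite mqzeta_trunc_cons ?gt_eqF ?(lt_trans ltr01) //.
rewrite /mqzeta_bound big_cons -/(mqzeta_bound l).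
apply: (@le_trans _ _ (\sum_(k < N) (q `^ (x - 1)) ^+ k * mqzeta_bound l)).
  by apply: ler_sum => k _; rewrite ler_pM ?qterm_ge0 ?mqzeta_trunc_ge0 ?qterm_le_expr ?IH.
rewrite -big_distrl /= ler_wpM2r //.
have := geometric_le_lim N ler01 r_gt0; rewrite ger0_norm ?(ltW r_gt0) // mul1r.
move=> /(_ r_lt1); rewrite /series /= big_mkord => /(le_trans _); apply.
by apply: ler_sum => k _; rewrite /geometric /= mul1r.
Qed.

Lemma nondecreasing_mqzeta_trunc l :
  all (fun x => 1 < x) l -> nondecreasing_seq (mqzeta_trunc q l).
Proof.
case: l => [_|x l /andP[x_gt1 _]]; apply/nondecreasing_seqP => N //.
rewrite !mqzeta_trunc_cons ?gt_eqF ?(lt_trans ltr01) // big_ord_recr /= lerDl.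
by rewrite mulr_ge0 ?qterm_ge0 ?mqzeta_trunc_ge0.
Qed.

Lemma mqzeta_trunc_cvg l : all (fun x => 1 < x) l ->
  mqzeta_trunc q l N @[N --> \oo] --> mqzeta q l.
Proof.
move=> l_gt1; apply: nondecreasing_is_cvgn; first exact: nondecreasing_mqzeta_trunc.
by exists (mqzeta_bound l) => _ [N _ <-]; exact: mqzeta_trunc_le_bound.
Qed.

End MultipleQZetaTruncation.

Lemma prod_powR (R : realType) (I : Type) (r : seq I) (P : pred I) (a : R) (e : I -> R) :
  0 < a -> \prod_(i <- r | P i) a `^ e i = a `^ (\sum_(i <- r | P i) e i).
Proof.
move=> a_gt0; elim/big_rec2: _ => [|i y1 y2 _ ->]; first by rewrite powRr0.
by rewrite powRD // (gt_eqF a_gt0) implybT.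
Qed.

Section PartitionFormula.
Variables (R : realType) (q : R).
Hypotheses (q_gt0 : 0 < q) (q_lt1 : q < 1).
Variables (I : finType) (s : I -> R).
Hypothesis s_gt1 : forall j, 1 < s j.

Let s_neq0 j : s j != 0. Proof. by rewrite gt_eqF // (lt_trans ltr01). Qed.

Lemma block_exponent_gt1 (B : {set I}) nu :
  (nu < #|B|)%N -> 1 < \sum_(j in B) s j - nu%:R.
Proof.
move=> nuB; have /card_gt0P[j0 j0B] : (0 < #|B|)%N by apply: leq_ltn_trans nuB.
have card_lt : #|B|%:R < \sum_(j in B) s j.
  rewrite -subr_gt0 -sumr_const -sumrB (bigD1 j0) //=.
  apply: (@lt_le_trans _ _ (s j0 - 1)); first by rewrite subr_gt0.
  by rewrite lerDl sumr_ge0 // => j _; rewrite subr_ge0 ltW.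
have : (nu.+1%:R : R) <= #|B|%:R by rewrite ler_nat.
by rewrite -natr1; lra.
Qed.

(* With [r := q^k / [k]_q], both sides are [r^S / q^(k |B|)], [S] the sum of
   exponents, because [1 + (1 - q) / r = q^-k]. *)
Lemma prod_qterm (B : {set I}) k : (0 < #|B|)%N ->
  \prod_(j in B) qterm q (s j) k =
  \sum_(nu < #|B|) 'C(#|B|.-1, nu)%:R * (1 - q) ^+ nu *
     qterm q (\sum_(j in B) s j - nu%:R) k.
Proof.
move=> B_gt0; set S := \sum_(j in B) s j.
case: k => [|k].
  have /card_gt0P[j0 j0B] := B_gt0.
  rewrite (bigD1 j0) //= qterm0 // mul0r big1 // => nu _.
  by rewrite qterm0 ?mulr0 // gt_eqF // (lt_trans ltr01) ?block_exponent_gt1.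
set Q := q ^+ k.+1; set K := qint q k.+1%:R; set r := Q / K.
have Q_gt0 : 0 < Q by rewrite exprn_gt0.
have K_gt0 : 0 < K by apply: lt_le_trans (qint_ge1 q_gt0 q_lt1 (ltn0Sn k)).
have r_gt0 : 0 < r by rewrite divr_gt0.
have q_neq1 : 1 - q != 0 by rewrite subr_eq0 eq_sym lt_eqF.
have Q_neq1 : 1 - Q != 0 by rewrite subr_eq0 eq_sym lt_eqF // exprn_ilt1 // ltW.
have binom_base : (1 - q) / r + 1 = Q^-1.
  rewrite /r /K /qint (powR_mulrn _ (ltW q_gt0)) -/Q; field.
  by rewrite (gt_eqF Q_gt0) q_neq1.
rewrite (eq_bigr (fun j => r `^ s j / Q)) => [|j _]; last by rewrite qterm_powR.
rewrite big_split /= prodr_const prod_powR // -/S.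
rewrite (eq_bigr (fun nu : 'I_#|B| => r `^ S / Q *
    (((1 - q) / r) ^+ nu *+ 'C(#|B|.-1, nu)))) => [|nu _]; last first.
  rewrite qterm_powR // -/Q -/K -/r powRB ?(gt_eqF r_gt0) ?implybT //.
  rewrite (powR_mulrn _ (ltW r_gt0)) mulr_natl mulrnAl mulrnAr; congr (_ *+ _).
  rewrite [in RHS]exprMn exprVn; move: (r `^ S) => rS; clearbody r; ring.
rewrite -big_distrr /= -[in RHS](prednK B_gt0) -exprD1n binom_base.
by rewrite -{1}(prednK B_gt0) exprS mulrA.
Qed.

Let qtermf j k := qterm q (s j) k.

Lemma power_trunc_qterm (B : {set I}) N : (0 < #|B|)%N ->
  power_trunc qtermf B N =
  \sum_(nu < #|B|) 'C(#|B|.-1, nu)%:R * (1 - q) ^+ nu *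
     mqzeta_trunc q [:: \sum_(j in B) s j - nu%:R] N.
Proof.
move=> B_gt0; rewrite /power_trunc; under eq_bigr do rewrite (prod_qterm _ B_gt0).
rewrite exchange_big; apply: eq_bigr => nu _.
rewrite mqzeta_trunc_cons ?gt_eqF ?(lt_trans ltr01) ?block_exponent_gt1 //.
by rewrite big_distrr; apply: eq_bigr => k _; rewrite mulr1.
Qed.

Lemma power_trunc_qterm_cvg (B : {set I}) : (0 < #|B|)%N ->
  power_trunc qtermf B N @[N --> \oo] -->
  \sum_(0 <= nu < #|B|) 'C(#|B|.-1, nu)%:R * (1 - q) ^+ nu *
     mqzeta q [:: \sum_(j in B) s j - nu%:R].
Proof.
move=> B_gt0; rewrite big_mkord; under eq_cvg do rewrite power_trunc_qterm //.
apply: (cvg_big (op := +%R) (x0 := 0) add_continuous) => // nu _.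
apply: cvgMl_tmp; apply: mqzeta_trunc_cvg => //.
by rewrite /= andbT block_exponent_gt1.
Qed.

Lemma mqzeta_trunc_nest (p : seq I) N :
  mqzeta_trunc q [seq s j | j <- p] N = nest qtermf p N.
Proof.
elim: p N => [|j p IH] N //; rewrite [map _ _]/= mqzeta_trunc_cons //.
by apply: eq_bigr => k _; rewrite IH.
Qed.

Lemma partition_trunc_cvg (A : {set I}) :
  partition_trunc qtermf A N @[N --> \oo] -->
  \sum_(P : {set {set I}} | finset.partition P A)
    (-1) ^+ (#|A| + #|P|) *
    \prod_(B in P)
      ((#|B|.-1)`!%:R *
       \sum_(0 <= nu < #|B|) 'C(#|B|.-1, nu)%:R * (1 - q) ^+ nu *
         mqzeta q [:: \sum_(j in B) s j - nu%:R]).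
Proof.
apply: (cvg_big (op := +%R) (x0 := 0) add_continuous) => // P pP.
apply: cvgMl_tmp; apply: (cvg_big (@mul_continuous R)) => // B BP.
apply: cvgMl_tmp; apply: power_trunc_qterm_cvg.
by rewrite card_gt0 (partition_neq0 pP BP).
Qed.

End PartitionFormula.

Lemma partition_trunc_cvg_sum_perm (R : realType) (q : R) n (s : 'I_n -> R) :
  0 < q -> q < 1 -> (forall j, 1 < s j) ->
  partition_trunc (fun j k => qterm q (s j) k) [set: 'I_n] N @[N --> \oo] -->
  \sum_(sigma : 'S_n) mqzeta q [seq s (sigma i) | i <- enum 'I_n].
Proof.
move=> q_gt0 q_lt1 s_gt1.
have truncE N : partition_trunc (fun j k => qterm q (s j) k) [set: 'I_n] N =
    \sum_(sigma : 'S_n) mqzeta_trunc q [seq s (sigma i) | i <- enum 'I_n] N.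
  under [RHS]eq_bigr do rewrite map_comp (mqzeta_trunc_nest _ s_gt1).
  rewrite (sum_perm_enum (fun p => nest _ p N)) sum_permutations_nest ?enum_uniq //.
  by rewrite sym_nestE; congr partition_trunc; apply/setP => i; rewrite !inE mem_enum.
under eq_cvg do rewrite truncE.
apply: (cvg_big (op := +%R) (x0 := 0) add_continuous) => // sigma _.
by apply: mqzeta_trunc_cvg => //; apply/allP => x /mapP[i _ ->].
Qed.

Theorem theorem2p3 (R : realType) (q : R) (n : nat) (s : 'I_n -> R) :
  0 < q -> q < 1 -> (0 < n)%N -> (forall j, 1 < s j) ->
  \sum_(sigma : 'S_n) mqzeta q [seq s (sigma i) | i <- enum 'I_n]
  = \sum_(P : {set {set 'I_n}} | finset.partition P [set: 'I_n])
      (-1) ^+ (n - #|P|) *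
      \prod_(B in P)
        ((#|B|.-1)`!%:R *
         \sum_(0 <= nu < #|B|)
           'C(#|B|.-1, nu)%:R * (1 - q) ^+ nu *
           mqzeta q [:: (\sum_(j in B) s j) - nu%:R]).
Proof.
move=> q_gt0 q_lt1 _ s_gt1.
have signE P : finset.partition P [set: 'I_n] ->
    (-1) ^+ (n - #|P|) = (-1) ^+ (#|[set: 'I_n]%SET| + #|P|) :> R.
  by move=> pP; rewrite -(partition_sign _ pP) cardsT card_ord.
under [RHS]eq_bigr => P pP do rewrite signE //.
rewrite -(cvg_lim (@Rhausdorff R) (partition_trunc_cvg_sum_perm q_gt0 q_lt1 s_gt1)).
have := partition_trunc_cvg q_gt0 q_lt1 s_gt1 (A := [set: 'I_n]%SET).
by move/(cvg_lim (@Rhausdorff R)) <-.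
Qed.
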